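(* Let $\mathcal{W}=\{W_x\}_{x\in\mathcal{X}}$ be a classical-quantum channel and $M\in\mathbb{N}$. Then \[ \varepsilon^{\rm NS}(M,\mathcal{W})\le\inf_{p\in\mathcal{P}(\mathcal{X})}\sup_{B=B^\dagger}\Big\{\Big(\sum_xp(x)\mathrm{Tr}[W_x\wedge MB^+]-\tfrac12\mathrm{Tr}[B^+]\Big)+\Big(\frac1M\sum_xp(x)\mathrm{Tr}[(W_x+MB^-)\wedge MB^+]-\tfrac12\mathrm{Tr}[B^+]\Big)\Big\}. \]
   Context: $\mathcal{H}$ finite-dimensional Hilbert space, $\mathcal{S}(\mathcal{H})$ its density operators, $\mathcal{P}(\mathcal{X})$ distributions on finite $\mathcal{X}$. A classical-quantum channel is $\mathcal{W}=\{W_x\}_{x\in\mathcal{X}}\subset\mathcal{S}(\mathcal{H})$. For Hermitian $B=\sum_i\lambda_i\Pi_i$ (spectral decomposition), $B^+=\sum_i\max(\lambda_i,0)\Pi_i$ and $B^-=\sum_i\max(-\lambda_i,0)\Pi_i$ (so $B=B^+-B^-$), $|B|=B^++B^-$; for Hermitian $A,C$, $A\wedge C=\frac12(A+C-|A-C|)$. For $M>0$: $1-\varepsilon^{\rm NS}(M,\mathcal{W})=\sup\{\frac1M\sum_x\mathrm{Tr}[\Lambda_xW_x]:\sum_x\Lambda_x=\mathbb{I},\ 0\preccurlyeq\Lambda_x\preccurlyeq p(x)\mathbb{I},\ p(x)\ge0,\ \sum_xp(x)=M\}$. *)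

From HB Require Import structures.
From mathcomp Require Import all_boot all_order all_algebra.
From mathcomp Require Import sesquilinear spectral.
From mathcomp Require Import complex.
From mathcomp Require Import all_classical all_reals.
From mathcomp Require Import ereal.

Set Implicit Arguments.
Unset Strict Implicit.
Unset Printing Implicit Defensive.

Import Order.TTheory GRing.Theory Num.Theory.
Local Open Scope ring_scope.
Local Open Scope complex_scope.

(* Positive and negative parts of a scalar; on real eigenvalues they are
   max(l,0) and max(-l,0). *)
Definition posC (R : realType) (z : R[i]) : R[i] := (z + `|z|) / 2%:R.
Definition negC (R : realType) (z : R[i]) : R[i] := (`|z| - z) / 2%:R.

Definition posmx (R : realType) n (B : 'M[R[i]]_n) : 'M[R[i]]_n :=
  invmx (spectralmx B) *m diag_mx (map_mx (@posC R) (spectral_diag B))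
    *m spectralmx B.
Definition negmx (R : realType) n (B : 'M[R[i]]_n) : 'M[R[i]]_n :=
  invmx (spectralmx B) *m diag_mx (map_mx (@negC R) (spectral_diag B))
    *m spectralmx B.
Definition absmx (R : realType) n (B : 'M[R[i]]_n) : 'M[R[i]]_n :=
  posmx B + negmx B.
Definition minmx (R : realType) n (A C : 'M[R[i]]_n) : 'M[R[i]]_n :=
  (2%:R)^-1 *: (A + C - absmx (A - C)).

Definition psdmx (R : realType) n (A : 'M[R[i]]_n) : Prop :=
  A \is hermsymmx /\ forall v : 'rV[R[i]]_n, 0 <= (v *m A *m (map_mx Num.conj (trmx v))) 0 0.
Definition loewner_le (R : realType) n (A B : 'M[R[i]]_n) : Prop :=
  psdmx (B - A).

Definition density (R : realType) n (rho : 'M[R[i]]_n) : Prop :=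
  psdmx rho /\ \tr rho = 1.

(* real trace of an operator (real part; the trace is real for Hermitian ones) *)
Definition retr (R : realType) n (A : 'M[R[i]]_n) : R := complex.Re (\tr A).

Definition distribution (R : realType) (X : finType) (p : X -> R) : Prop :=
  (forall x, 0 <= p x) /\ \sum_(x : X) p x = 1.

Definition ns_success (R : realType) (X : finType) n (M : R)
    (W : X -> 'M[R[i]]_n) : \bar R :=
  ereal_sup [set s%:E | s in
    [set s : R | exists (Lam : X -> 'M[R[i]]_n) (p : X -> R),
      [/\ \sum_(x : X) Lam x = 1%:M,
          forall x, psdmx (Lam x) /\ loewner_le (Lam x) ((p x)%:C *: 1%:M),
          forall x, 0 <= p x,
          \sum_(x : X) p x = M &
          s = M^-1 * \sum_(x : X) retr (Lam x *m W x)]]].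

Definition eps_NS (R : realType) (X : finType) n (M : R)
    (W : X -> 'M[R[i]]_n) : \bar R :=
  (1%:E - ns_success M W)%E.

Definition lemma2_obj (R : realType) (X : finType) n (M : R)
    (W : X -> 'M[R[i]]_n) (p : X -> R) (B : 'M[R[i]]_n) : R :=
  (\sum_(x : X) p x * retr (minmx (W x) (M%:C *: posmx B))
     - 2^-1 * retr (posmx B))
  + (M^-1 * \sum_(x : X) p x *
        retr (minmx (W x + M%:C *: negmx B) (M%:C *: posmx B))
     - 2^-1 * retr (posmx B)).

From HB Require Import structures.
From mathcomp Require Import all_boot all_order all_algebra.
From mathcomp Require Import sesquilinear spectral.
From mathcomp Require Import complex.
From mathcomp Require Import all_classical all_reals.
From mathcomp Require Import ereal.
From mathcomp Require Import ring lra.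

(* Fix a distribution [q] and restrict the non-signalling program to [p = M q]; let [S]
   be its optimal success probability.  The pairs [(I - sum_x L x, success L)], over the
   families with [0 <= L x <= M q(x) I], form a convex set [K] at distance at least [d/2]
   from the point [(0, S + d)]: a family whose sum is close to [I] can be repaired into a
   feasible code at a small cost in success.  An approximate nearest point of [K] thus
   yields an approximately separating functional [(Y, tau)].  Testing it on the family
   [L x = M q(x) P_x], with [P_x] the projector onto the positive part of [W_x - M Y], gives
   [tr Y + sum_x q(x) tr (W_x - M Y)^+ <= S + d], and the objective at [B = Y] is at least
   [1] minus this quantity since [tr (W_x - M Y^+)^+] is bounded by [tr (W_x - M Y)^+] and
   by [1]. *)

Set Implicit Arguments.
Unset Strict Implicit.
Unset Printing Implicit Defensive.

Import Order.TTheory GRing.Theory Num.Theory Num.Def.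
Local Open Scope ring_scope.
Local Open Scope complex_scope.
Local Open Scope sesquilinear_scope.

Section ConjugateTranspose.
Context {C : numClosedFieldType}.

Lemma trmxC_mul m p q (A : 'M[C]_(m, p)) (B : 'M[C]_(p, q)) :
  (A *m B) ^t* = B ^t* *m A ^t*.
Proof. by rewrite trmx_mul map_mxM. Qed.

Lemma trmxCD m p (A B : 'M[C]_(m, p)) : (A + B) ^t* = A ^t* + B ^t*.
Proof. by rewrite linearD /= map_mxD. Qed.

Lemma trmxCB m p (A B : 'M[C]_(m, p)) : (A - B) ^t* = A ^t* - B ^t*.
Proof. by rewrite linearB /= map_mxB. Qed.

Lemma hermsymmxP n (A : 'M[C]_n) : reflect (A ^t* = A) (A \is hermsymmx).
Proof.
apply: (iffP (is_hermitianmxP _ _ _)); rewrite expr0 scale1r; first exact: esym.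
by move=> ->.
Qed.

Lemma hermsymmxD n (A B : 'M[C]_n) :
  A \is hermsymmx -> B \is hermsymmx -> A + B \is hermsymmx.
Proof. by move=> /hermsymmxP hA /hermsymmxP hB; apply/hermsymmxP; rewrite trmxCD hA hB. Qed.

Lemma hermsymmxB n (A B : 'M[C]_n) :
  A \is hermsymmx -> B \is hermsymmx -> A - B \is hermsymmx.
Proof. by move=> /hermsymmxP hA /hermsymmxP hB; apply/hermsymmxP; rewrite trmxCB hA hB. Qed.

End ConjugateTranspose.

Section UnitaryDiagonal.
Context {C : numClosedFieldType} {n : nat}.

Definition udiagmx (P : 'M[C]_n) (d : 'rV[C]_n) : 'M[C]_n := P ^t* *m diag_mx d *m P.

Lemma trmxC_udiagmx P d : (udiagmx P d) ^t* = udiagmx P (map_mx conjC d).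
Proof. by rewrite /udiagmx !trmxC_mul trmxCK tr_diag_mx map_diag_mx mulmxA. Qed.

Lemma udiagmx_herm P d : d \is a realmx -> udiagmx P d \is hermsymmx.
Proof. by move=> d_real; apply/hermsymmxP; rewrite trmxC_udiagmx realmxC. Qed.

Variable P : 'M[C]_n.
Hypothesis P_unitary : P \is unitarymx.

Lemma trmxC_mulmx_unitary : P ^t* *m P = 1%:M.
Proof. by rewrite -[P ^t*]mul1mx mulmxKtV. Qed.

Lemma udiagmx_const a : udiagmx P (const_mx a) = a%:M.
Proof.
by rewrite /udiagmx diag_const_mx scalar_mxC -mulmxA trmxC_mulmx_unitary mulmx1.
Qed.

Lemma udiagmxD d e : udiagmx P (d + e) = udiagmx P d + udiagmx P e.
Proof. by rewrite /udiagmx linearD /= mulmxDr mulmxDl. Qed.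

Lemma udiagmxB d e : udiagmx P (d - e) = udiagmx P d - udiagmx P e.
Proof. by rewrite /udiagmx linearB /= mulmxBr mulmxBl. Qed.

Lemma mxtrace_udiagmx d : \tr (udiagmx P d) = \sum_j d 0 j.
Proof. by rewrite /udiagmx mxtrace_mulC mulmxA (unitarymxP _) // mul1mx mxtrace_diag. Qed.

Lemma udiagmxM d e : udiagmx P d *m udiagmx P e = udiagmx P (\row_j (d 0 j * e 0 j)).
Proof.
rewrite /udiagmx; have -> : diag_mx (\row_j (d 0 j * e 0 j)) = diag_mx d *m diag_mx e.
  apply/matrixP => i j; rewrite mul_diag_mx !mxE.
  by case: (eqVneq i j) => [->|_]; rewrite ?mulr1n ?mulr0n ?mulr0.
by rewrite -!mulmxA (mulmxA P) (unitarymxP _) // mul1mx.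
Qed.

Lemma mxtrace_udiagmxM d e : \tr (udiagmx P d *m udiagmx P e) = \sum_j d 0 j * e 0 j.
Proof. by rewrite udiagmxM mxtrace_udiagmx; apply: eq_bigr => j _; rewrite mxE. Qed.

Lemma udiagmx_conj d : P *m udiagmx P d *m P ^t* = diag_mx d.
Proof. by rewrite /udiagmx !mulmxA (unitarymxP _) // mul1mx mulmxtVK. Qed.

Lemma udiagmx_form (v : 'rV[C]_n) d : let w := v *m P ^t* in
  (v *m udiagmx P d *m v ^t*) 0 0 = \sum_i d 0 i * (w 0 i * (w 0 i)^*).
Proof.
move=> w; have -> : v *m udiagmx P d *m v ^t* = w *m diag_mx d *m w ^t*.
  by rewrite /udiagmx /w trmxC_mul trmxCK !mulmxA.
rewrite mul_mx_diag !mxE; apply: eq_bigr => i _; rewrite !mxE.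
by rewrite mulrAC mulrC.
Qed.

End UnitaryDiagonal.

Lemma hermsymmx_spectral {C : numClosedFieldType} n (A : 'M[C]_n) :
  A \is hermsymmx -> A = udiagmx (spectralmx A) (spectral_diag A).
Proof.
move=> /hermitian_normalmx /orthomx_spectralP {1}->.
by rewrite invmx_unitary ?spectral_unitarymx.
Qed.

Section PositiveSemidefinite.
Variable R : realType.
Local Notation C := R[i].
Variable n : nat.
Local Notation mx := 'M[C]_n.

Lemma trmxC_scale_real m p (a : R) (A : 'M[C]_(m, p)) : (a%:C *: A) ^t* = a%:C *: A ^t*.
Proof. by apply/matrixP => i j; rewrite !mxE rmorphM /=; congr (_ * _); exact: conjc_real. Qed.

Lemma hermsymmxZ (a : R) (A : mx) : A \is hermsymmx -> a%:C *: A \is hermsymmx.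
Proof. by move=> /hermsymmxP hA; apply/hermsymmxP; rewrite trmxC_scale_real hA. Qed.

Lemma psdmx_herm (A : mx) : psdmx A -> A \is hermsymmx.
Proof. by case. Qed.

Lemma psdmx0 : psdmx (0 : mx).
Proof.
split=> [|v]; last by rewrite mulmx0 mul0mx mxE.
by apply/hermsymmxP; rewrite trmx0 map_mx0.
Qed.

Lemma psdmx1 : psdmx (1%:M : mx).
Proof.
split=> [|v]; first exact: hermitian1mx_subproof.
rewrite mulmx1 mxE; apply: sumr_ge0 => i _; rewrite !mxE; exact: mul_conjC_ge0.
Qed.

Lemma psdmxD (A B : mx) : psdmx A -> psdmx B -> psdmx (A + B).
Proof.
move=> [hA qA] [hB qB]; split=> [|v]; first exact: hermsymmxD.
by rewrite mulmxDr mulmxDl mxE addr_ge0.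
Qed.

Lemma psdmx_sum (I : finType) (F : I -> mx) : (forall i, psdmx (F i)) -> psdmx (\sum_i F i).
Proof. by move=> psdF; elim/big_ind: _ => //; [exact: psdmx0 | exact: psdmxD]. Qed.

Lemma psdmxZ (a : R) (A : mx) : 0 <= a -> psdmx A -> psdmx (a%:C *: A).
Proof.
move=> a_ge0 [hA qA]; split=> [|v]; first exact: hermsymmxZ.
by rewrite -scalemxAr -scalemxAl mxE mulr_ge0 ?ler0c.
Qed.

Lemma psdmx_scalar (a : R) : 0 <= a -> psdmx (a%:C *: (1%:M : mx)).
Proof. by move=> a_ge0; apply: psdmxZ => //; exact: psdmx1. Qed.

Lemma psdmx_udiagmx (P : mx) (d : 'rV[C]_n) : P \is unitarymx ->
  (forall i, 0 <= d 0 i) -> psdmx (udiagmx P d).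
Proof.
move=> P_unitary d_ge0; split=> [|v].
  by apply: udiagmx_herm; apply/mxOverP => i j; rewrite ord1 ger0_real.
rewrite udiagmx_form //; apply: sumr_ge0 => i _.
by rewrite mulr_ge0 ?mul_conjC_ge0.
Qed.

Lemma psdmx_conj_diag_ge0 (A Q : mx) i : psdmx A -> 0 <= (Q *m A *m Q ^t*) i i.
Proof.
case=> _ /(_ (row i Q)); congr (0 <= _).
by rewrite -row_mul !mxE; apply: eq_bigr => k _; rewrite !mxE.
Qed.

Lemma psdmx_spectral_diag_ge0 (A : mx) i : psdmx A -> 0 <= spectral_diag A 0 i.
Proof.
move=> A_psd; have := psdmx_conj_diag_ge0 (spectralmx A) i A_psd.
rewrite {2}(hermsymmx_spectral (psdmx_herm A_psd)).
by rewrite udiagmx_conj ?spectral_unitarymx // mxE eqxx mulr1n.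
Qed.

Lemma mxtrace_mul_psd_ge0 (A B : mx) : psdmx A -> psdmx B -> 0 <= \tr (A *m B).
Proof.
move=> A_psd B_psd; rewrite (hermsymmx_spectral (psdmx_herm B_psd)) /udiagmx.
rewrite !mulmxA mxtrace_mulC !mulmxA; apply: sumr_ge0 => i _.
rewrite mul_mx_diag mxE mulr_ge0 ?psdmx_conj_diag_ge0 //.
exact: psdmx_spectral_diag_ge0.
Qed.

End PositiveSemidefinite.

Section PositivePart.
Variable R : realType.
Local Notation C := R[i].
Variable n : nat.
Local Notation mx := 'M[C]_n.

Lemma posC_sub_negC (z : C) : posC z - negC z = z.
Proof. by rewrite /posC /negC; field. Qed.

Lemma posC_real (z : C) : z \is Num.real -> posC z = if 0 < z then z else 0.
Proof.
move=> z_real; rewrite /posC; case: (real_ltgt0P z_real) => [z_gt0|z_lt0|->].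
- by field.
- by rewrite subrr mul0r.
- by rewrite addr0 mul0r.
Qed.

Lemma posC_ge0 (z : C) : z \is Num.real -> 0 <= posC z.
Proof. by move=> z_real; rewrite posC_real //; case: ifP => // /ltW. Qed.

Lemma negC_ge0 (z : C) : z \is Num.real -> 0 <= negC z.
Proof. by move=> z_real; rewrite /negC divr_ge0 ?ler0n // subr_ge0 real_ler_norm. Qed.

Lemma posmxE (A : mx) :
  posmx A = udiagmx (spectralmx A) (map_mx (@posC R) (spectral_diag A)).
Proof. by rewrite /posmx invmx_unitary ?spectral_unitarymx. Qed.

Lemma negmxE (A : mx) :
  negmx A = udiagmx (spectralmx A) (map_mx (@negC R) (spectral_diag A)).
Proof. by rewrite /negmx invmx_unitary ?spectral_unitarymx. Qed.

Lemma spectral_diag_real (A : mx) i : A \is hermsymmx -> spectral_diag A 0 i \is Num.real.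
Proof. by move/hermitian_spectral_diag_real/mxOverP; apply. Qed.

Lemma posmx_sub_negmx (A : mx) : A \is hermsymmx -> posmx A - negmx A = A.
Proof.
move=> hA; rewrite posmxE negmxE -udiagmxB ?spectral_unitarymx //.
rewrite [RHS](hermsymmx_spectral hA); congr udiagmx.
by apply/matrixP => i j; rewrite !mxE posC_sub_negC.
Qed.

Lemma psdmx_posmx (A : mx) : A \is hermsymmx -> psdmx (posmx A).
Proof.
move=> hA; rewrite posmxE; apply: psdmx_udiagmx; first exact: spectral_unitarymx.
by move=> i; rewrite mxE posC_ge0 ?spectral_diag_real.
Qed.

Lemma psdmx_negmx (A : mx) : A \is hermsymmx -> psdmx (negmx A).
Proof.
move=> hA; rewrite negmxE; apply: psdmx_udiagmx; first exact: spectral_unitarymx.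
by move=> i; rewrite mxE negC_ge0 ?spectral_diag_real.
Qed.

Lemma minmxE (A B : mx) : A - B \is hermsymmx -> minmx A B = A - posmx (A - B).
Proof.
move=> /posmx_sub_negmx; rewrite /minmx /absmx.
move: (posmx _) (negmx _) => P N PN; have -> : N = P - (A - B).
  by rewrite -PN opprB addrC subrK.
by apply/matrixP => i j; rewrite !mxE; field.
Qed.

Definition posproj (A : mx) : mx :=
  udiagmx (spectralmx A) (map_mx (fun z : C => if 0 < z then 1 else 0) (spectral_diag A)).

Lemma psdmx_posproj (A : mx) : psdmx (posproj A).
Proof.
apply: psdmx_udiagmx; first exact: spectral_unitarymx.
by move=> i; rewrite mxE; case: ifP.
Qed.

Lemma psdmx_1_posproj (A : mx) : psdmx (1%:M - posproj A).
Proof.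
have P_unitary := spectral_unitarymx A.
rewrite -(udiagmx_const P_unitary) /posproj -udiagmxB //.
apply: psdmx_udiagmx => // i; rewrite !mxE.
by case: ifP; rewrite ?subrr ?subr0 ?ler01.
Qed.

Lemma mxtrace_posproj_mul (A : mx) : A \is hermsymmx -> \tr (posproj A *m A) = \tr (posmx A).
Proof.
move=> hA; rewrite {2}(hermsymmx_spectral hA) posmxE /posproj.
rewrite mxtrace_udiagmxM ?spectral_unitarymx // mxtrace_udiagmx ?spectral_unitarymx //.
apply: eq_bigr => j _; rewrite !mxE posC_real ?spectral_diag_real //.
by case: ifP; rewrite ?mul1r ?mul0r.
Qed.

End PositivePart.

Section RealTrace.
Variable R : realType.
Local Notation C := R[i].
Variable n : nat.
Local Notation mx := 'M[C]_n.
Local Notation Re := (@complex.Re R).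

Lemma Re_ge0 (z : C) : 0 <= z -> 0 <= Re z.
Proof. by case: z => a b; rewrite lecE => /andP[]. Qed.

Lemma Re_sum (I : finType) (F : I -> C) : Re (\sum_i F i) = \sum_i Re (F i).
Proof. by apply: big_morph => // x y; rewrite raddfD. Qed.

Lemma retr0 : retr (0 : mx) = 0.
Proof. by rewrite /retr mxtrace0. Qed.

Lemma retrD (A B : mx) : retr (A + B) = retr A + retr B.
Proof. by rewrite /retr mxtraceD raddfD. Qed.

Lemma retrB (A B : mx) : retr (A - B) = retr A - retr B.
Proof. by rewrite /retr !raddfB. Qed.

Lemma retrZ (a : R) (A : mx) : retr (a%:C *: A) = a * retr A.
Proof. by rewrite /retr mxtraceZ; move: (\tr A) => [u v] /=; rewrite mul0r subr0. Qed.

Lemma retr_sum (I : finType) (F : I -> mx) : retr (\sum_i F i) = \sum_i retr (F i).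
Proof. exact: (big_morph _ retrD retr0). Qed.

Lemma retr1 : retr (1%:M : mx) = n%:R.
Proof. by rewrite /retr mxtrace1 raddfMn. Qed.

Lemma retr_mulC (A B : mx) : retr (A *m B) = retr (B *m A).
Proof. by rewrite /retr mxtrace_mulC. Qed.

Lemma retr_mul_psd_ge0 (A B : mx) : psdmx A -> psdmx B -> 0 <= retr (A *m B).
Proof. by move=> A_psd B_psd; apply/Re_ge0/mxtrace_mul_psd_ge0. Qed.

Lemma retr_mul_le_scalar (c : R) (L Z : mx) : psdmx Z -> psdmx (c%:C *: 1%:M - L) ->
  retr (L *m Z) <= c * retr Z.
Proof.
move=> Z_psd /retr_mul_psd_ge0 /(_ Z_psd).
by rewrite mulmxBl -scalemxAl mul1mx retrB retrZ subr_ge0.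
Qed.

Lemma retr_effect_mul_le (T Z : mx) : psdmx (1%:M - T) -> psdmx Z ->
  retr (T *m Z) <= retr Z.
Proof.
move=> T_le1 Z_psd; have := retr_mul_le_scalar Z_psd (_ : psdmx (1%:C *: 1%:M - T)).
by rewrite scale1r mul1r; apply.
Qed.

Lemma retr_effect_mul_le_posmx (T Z : mx) : psdmx T -> psdmx (1%:M - T) ->
  Z \is hermsymmx -> retr (T *m Z) <= retr (posmx Z).
Proof.
move=> T_psd T_le1 hZ; rewrite -{1}(posmx_sub_negmx hZ) mulmxBr retrB.
rewrite lerBlDr (le_trans (retr_effect_mul_le T_le1 (psdmx_posmx hZ))) // lerDl.
exact: retr_mul_psd_ge0 (psdmx_negmx hZ).
Qed.

Lemma retr_posproj_mul (A : mx) : A \is hermsymmx -> retr (posproj A *m A) = retr (posmx A).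
Proof. by move=> hA; rewrite /retr mxtrace_posproj_mul. Qed.

Lemma retr_posmx_le_posproj (X Z : mx) : X \is hermsymmx -> psdmx (Z - X) ->
  retr (posmx X) <= retr (posproj X *m Z).
Proof.
move=> hX /(retr_mul_psd_ge0 (psdmx_posproj X)).
by rewrite mulmxBr retrB subr_ge0 retr_posproj_mul.
Qed.

Lemma retr_posmx_le (X Z : mx) : X \is hermsymmx -> Z \is hermsymmx -> psdmx (Z - X) ->
  retr (posmx X) <= retr (posmx Z).
Proof.
move=> hX hZ ZX_psd; apply: le_trans (retr_posmx_le_posproj hX ZX_psd) _.
exact: retr_effect_mul_le_posmx (psdmx_posproj X) (psdmx_1_posproj X) hZ.
Qed.

Lemma retr_posmx_le_psd (X Z : mx) : X \is hermsymmx -> psdmx Z -> psdmx (Z - X) ->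
  retr (posmx X) <= retr Z.
Proof.
move=> hX Z_psd ZX_psd; apply: le_trans (retr_posmx_le_posproj hX ZX_psd) _.
exact: retr_effect_mul_le (psdmx_1_posproj X) Z_psd.
Qed.

Lemma retr_sqr_spectral (E : mx) : E \is hermsymmx ->
  retr (E *m E) = \sum_i (Re (spectral_diag E 0 i)) ^+ 2.
Proof.
move=> hE; rewrite /retr {1 2}(hermsymmx_spectral hE).
rewrite mxtrace_udiagmxM ?spectral_unitarymx // Re_sum; apply: eq_bigr => i _.
by rewrite -[in LHS](RRe_real (spectral_diag_real i hE)) -rmorphM.
Qed.

Lemma retr_sqr_ge0 (E : mx) : E \is hermsymmx -> 0 <= retr (E *m E).
Proof. by move=> hE; rewrite retr_sqr_spectral // sumr_ge0 // => i _; exact: sqr_ge0. Qed.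

Lemma retr_sqr_loewner_bound (E : mx) (eps : R) : E \is hermsymmx -> 0 <= eps ->
  retr (E *m E) <= eps ^+ 2 ->
  psdmx (eps%:C *: 1%:M - E) /\ psdmx (eps%:C *: 1%:M + E).
Proof.
move=> hE eps_ge0; rewrite retr_sqr_spectral // => sum_le.
have P_unitary := spectral_unitarymx E.
have eig_le i : (Re (spectral_diag E 0 i)) ^+ 2 <= eps ^+ 2.
  apply: le_trans sum_le; rewrite (bigD1 i) //= lerDl.
  by apply: sumr_ge0 => j _; exact: sqr_ge0.
rewrite scalemx1 -(udiagmx_const P_unitary) {2 4}(hermsymmx_spectral hE).
rewrite -udiagmxB // -udiagmxD //; split; apply: psdmx_udiagmx => // i; rewrite !mxE;
  rewrite -(RRe_real (spectral_diag_real i hE)) -?rmorphB -?rmorphD ler0c;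
  move: (eig_le i); set r := Re _; nra.
Qed.

Lemma retr_sqr_sub_le (c : R) (A B : mx) : psdmx A -> psdmx B ->
  psdmx (c%:C *: 1%:M - A) -> psdmx (c%:C *: 1%:M - B) ->
  retr ((B - A) *m (B - A)) <= c ^+ 2 * n%:R.
Proof.
move=> A_psd B_psd A_le B_le.
have := retr_mul_psd_ge0 (psdmxD B_le A_psd) (psdmxD A_le B_psd).
have -> : c%:C *: 1%:M - B + A = c%:C *: 1%:M - (B - A) by rewrite addrAC -addrA opprB.
have -> : c%:C *: 1%:M - A + B = c%:C *: 1%:M + (B - A) by rewrite addrAC -addrA.
move: (B - A) => D; rewrite mulmxBl !mulmxDr -!scalemxAl -!scalemxAr !mul1mx mulmx1.
by rewrite scalerA -rmorphM opprD addrA addrK retrB retrZ retr1 subr_ge0 expr2.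
Qed.

Lemma retr_sqr_subZ (A B : mx) (t : R) :
  retr ((A - t%:C *: B) *m (A - t%:C *: B)) =
  retr (A *m A) - 2 * t * retr (A *m B) + t ^+ 2 * retr (B *m B).
Proof.
rewrite !(mulmxBl, mulmxBr) -!scalemxAl -!scalemxAr !retrB !retrZ.
by rewrite [retr (B *m A)]retr_mulC; ring.
Qed.

End RealTrace.

Lemma approx_min_quadratic (R : realFieldType) (a b c g N : R) :
  0 < g -> 0 < N -> c <= N ->
  a <= a - 2 * (g / (2 * N)) * b + (g / (2 * N)) ^+ 2 * c + g ^+ 2 / (4 * N) ->
  b <= g / 2.
Proof.
move=> g_gt0 N_gt0 c_le; set t := g / (2 * N).
have t_gt0 : 0 < t by rewrite divr_gt0 // mulr_gt0.
have -> : g ^+ 2 / (4 * N) = t ^+ 2 * N by rewrite /t; field; rewrite gt_eqF.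
have tN : 2 * (t ^+ 2 * N) = t * g by rewrite /t; field; rewrite gt_eqF.
have := ler_wpM2l (sqr_ge0 t) c_le; rewrite -(ler_pM2l t_gt0); nra.
Qed.

Section NonSignallingCodes.
Variables (R : realType) (X : finType) (n : nat).
Local Notation C := R[i].
Local Notation mx := 'M[C]_n.
Variables (W : X -> mx) (M : nat) (q : X -> R).
Hypothesis W_density : forall x, density (W x).
Hypothesis M_gt0 : (0 < M)%N.
Hypothesis q_distribution : distribution q.
Local Notation Mr := (M%:R : R).

Lemma Mr_gt0 : 0 < Mr.
Proof. by rewrite ltr0n. Qed.

Lemma q_ge0 x : 0 <= q x.
Proof. by case: q_distribution. Qed.

Lemma sum_q : \sum_x q x = 1.
Proof. by case: q_distribution. Qed.

Lemma W_psd x : psdmx (W x).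
Proof. by case: (W_density x). Qed.

Lemma retr_W x : retr (W x) = 1.
Proof. by case: (W_density x) => _ trW; rewrite /retr trW. Qed.

Lemma sum_q_mulr c : \sum_x q x * c = c.
Proof. by rewrite -mulr_suml sum_q mul1r. Qed.

(* The non-signalling constraints [0 <= L x <= p x I] for the fixed choice [p = M q]. *)
Definition in_box (L : X -> mx) :=
  forall x, psdmx (L x) /\ psdmx ((Mr * q x)%:C *: 1%:M - L x).

Definition code_sum (L : X -> mx) : mx := \sum_x L x.

Definition success (L : X -> mx) : R := Mr^-1 * \sum_x retr (L x *m W x).

Lemma success_ge0 L : in_box L -> 0 <= success L.
Proof.
move=> L_box; rewrite mulr_ge0 ?invr_ge0 ?ler0n // sumr_ge0 // => x _.
by apply: retr_mul_psd_ge0 (W_psd x); case: (L_box x).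
Qed.

Lemma success_le1 L : in_box L -> success L <= 1.
Proof.
move=> L_box; rewrite ler_pdivrMl ?Mr_gt0 // mulr1.
have -> : Mr = \sum_x Mr * q x by rewrite -mulr_sumr sum_q mulr1.
apply: ler_sum => x _.
by case: (L_box x) => _ /(retr_mul_le_scalar (W_psd x)); rewrite retr_W mulr1.
Qed.

Lemma psdmx_code_sum L : in_box L -> psdmx (code_sum L).
Proof. by move=> L_box; apply: psdmx_sum => x; case: (L_box x). Qed.

Lemma psdmx_sub_code_sum L : in_box L -> psdmx (Mr%:C *: 1%:M - code_sum L).
Proof.
move=> L_box; have := psdmx_sum (fun x => proj2 (L_box x)).
by rewrite sumrB -scaler_suml -raddf_sum -mulr_sumr sum_q mulr1.
Qed.

Lemma hermsymmx_1_sub_code_sum L : in_box L -> 1%:M - code_sum L \is hermsymmx.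
Proof.
move=> L_box; apply: hermsymmxB (psdmx_herm (psdmx_code_sum L_box)).
exact: hermitian1mx_subproof.
Qed.

Definition uniform_code : X -> mx := fun x => (q x)%:C *: 1%:M.

Lemma in_box_uniform : in_box uniform_code.
Proof.
move=> x; split; first exact: psdmx_scalar (q_ge0 x).
rewrite /uniform_code -scalerBl -rmorphB; apply: psdmx_scalar.
by rewrite -{2}[q x]mul1r -mulrBl mulr_ge0 ?q_ge0 // subr_ge0 ler1n.
Qed.

Lemma code_sum_uniform : code_sum uniform_code = 1%:M.
Proof. by rewrite /code_sum /uniform_code -scaler_suml -raddf_sum sum_q scale1r. Qed.

Lemma success_uniform : success uniform_code = Mr^-1.
Proof.
rewrite /success /uniform_code.
under eq_bigr do rewrite -scalemxAl mul1mx retrZ retr_W mulr1.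
by rewrite sum_q mulr1.
Qed.

Definition repair (a : R) (L : X -> mx) : X -> mx :=
  fun x => a%:C *: L x + (q x)%:C *: (1%:M - a%:C *: code_sum L).

Lemma code_sum_repair a L : code_sum (repair a L) = 1%:M.
Proof.
rewrite /code_sum /repair big_split /= -scaler_sumr -scaler_suml -raddf_sum sum_q.
by rewrite scale1r addrC subrK.
Qed.

Lemma success_repair_ge a L : 0 <= a -> psdmx (1%:M - a%:C *: code_sum L) ->
  a * success L <= success (repair a L).
Proof.
move=> a_ge0 rest_psd; rewrite /success mulrCA ler_pM2l ?invr_gt0 ?Mr_gt0 // mulr_sumr.
apply: ler_sum => x _; rewrite /repair mulmxDl retrD -!scalemxAl !retrZ lerDl.
by rewrite mulr_ge0 ?q_ge0 //; exact: retr_mul_psd_ge0 (W_psd x).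
Qed.

Lemma psdmx_repair_rest eps L : 0 <= eps ->
  psdmx (eps%:C *: 1%:M + (1%:M - code_sum L)) ->
  psdmx (1%:M - ((1 + eps)^-1)%:C *: code_sum L).
Proof.
move=> eps_ge0 upper.
have aC : ((1 + eps)^-1)%:C = (1 + eps%:C)^-1 by rewrite fmorphV rmorphD rmorph1.
have eps1_neq0 : 1 + eps%:C != 0.
  by rewrite -(rmorph1 (real_complex R)) -rmorphD (inj_eq (@complexI R)) gt_eqF //; lra.
have -> : 1%:M - ((1 + eps)^-1)%:C *: code_sum L =
    ((1 + eps)^-1)%:C *: (eps%:C *: 1%:M + (1%:M - code_sum L)).
  by apply/matrixP => i j; rewrite !mxE aC; field.
by apply: psdmxZ; rewrite // invr_ge0 addr_ge0.
Qed.

Lemma in_box_repair eps L : (1 < M)%N -> 0 <= eps -> in_box L ->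
  psdmx (eps%:C *: 1%:M - (1%:M - code_sum L)) ->
  psdmx (eps%:C *: 1%:M + (1%:M - code_sum L)) ->
  in_box (repair (1 + eps)^-1 L).
Proof.
move=> M_gt1 eps_ge0 L_box lower upper.
set a := (1 + eps)^-1; have a_ge0 : 0 <= a by rewrite invr_ge0 addr_ge0.
have aC : a%:C = (1 + eps%:C)^-1 by rewrite fmorphV rmorphD rmorph1.
have eps1_neq0 : 1 + eps%:C != 0.
  by rewrite -(rmorph1 (real_complex R)) -rmorphD (inj_eq (@complexI R)) gt_eqF //; lra.
move=> x; split.
  apply: psdmxD; first exact: psdmxZ (proj1 (L_box x)).
  exact: psdmxZ (q_ge0 x) (psdmx_repair_rest eps_ge0 upper).
have -> : (Mr * q x)%:C *: 1%:M - repair a L x = a%:C *: ((Mr * q x)%:C *: 1%:M - L x) +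
    (q x)%:C *: (a%:C *: ((eps%:C *: 1%:M - (1%:M - code_sum L)) +
                          ((Mr - 2%:R) * eps)%:C *: 1%:M)).
  by apply/matrixP => i j; rewrite !mxE !rmorphM !rmorphB /= !rmorph_nat aC; field.
apply: psdmxD; first exact: psdmxZ (proj2 (L_box x)).
apply: psdmxZ (q_ge0 x) _; apply: psdmxZ a_ge0 _; apply: psdmxD lower _.
by apply: psdmx_scalar; rewrite mulr_ge0 // subr_ge0 (ler_nat _ 2).
Qed.

Definition sqdist (s : R) (L : X -> mx) : R :=
  retr ((1%:M - code_sum L) *m (1%:M - code_sum L)) + (s - success L) ^+ 2.

Lemma sqdist_ge0 s L : in_box L -> 0 <= sqdist s L.
Proof.
move=> L_box; rewrite addr_ge0 ?sqr_ge0 //.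
exact: retr_sqr_ge0 (hermsymmx_1_sub_code_sum L_box).
Qed.

Lemma sqdist_near_min s eta : 0 < eta ->
  exists2 L0, in_box L0 & forall L, in_box L -> sqdist s L0 <= sqdist s L + eta.
Proof.
move=> eta_gt0; pose D : set R := fun y => exists2 L, in_box L & y = sqdist s L.
have D_lb : has_lbound D by exists 0 => _ [L L_box ->]; exact: sqdist_ge0.
have D_n0 : (D !=set0)%classic.
  by exists (sqdist s uniform_code); exists uniform_code => //; exact: in_box_uniform.
have [_ [L0 L0_box ->] L0_lt] := inf_adherent eta_gt0 (conj D_n0 D_lb).
exists L0 => // L L_box; have : inf D <= sqdist s L by apply: (ge_inf D_lb); exists L.
lra.
Qed.

Definition mix (t : R) (L0 L1 : X -> mx) : X -> mx :=
  fun x => (1 - t)%:C *: L0 x + t%:C *: L1 x.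

Lemma in_box_mix t L0 L1 : 0 <= t <= 1 -> in_box L0 -> in_box L1 -> in_box (mix t L0 L1).
Proof.
move=> /andP[t_ge0 t_le1] L0_box L1_box x.
have t'_ge0 : 0 <= 1 - t by rewrite subr_ge0.
split.
  by apply: psdmxD; [apply: psdmxZ (proj1 (L0_box x)) | apply: psdmxZ (proj1 (L1_box x))].
have -> : (Mr * q x)%:C *: 1%:M - mix t L0 L1 x =
    (1 - t)%:C *: ((Mr * q x)%:C *: 1%:M - L0 x) + t%:C *: ((Mr * q x)%:C *: 1%:M - L1 x).
  by apply/matrixP => i j; rewrite !mxE !rmorphB rmorph1 /=; ring.
by apply: psdmxD; [apply: psdmxZ (proj2 (L0_box x)) | apply: psdmxZ (proj2 (L1_box x))].
Qed.

Lemma code_sum_mix t L0 L1 :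
  code_sum (mix t L0 L1) = (1 - t)%:C *: code_sum L0 + t%:C *: code_sum L1.
Proof. by rewrite /code_sum /mix big_split /= -!scaler_sumr. Qed.

Lemma success_mix t L0 L1 : success (mix t L0 L1) = (1 - t) * success L0 + t * success L1.
Proof.
rewrite /success /mix; under eq_bigr do rewrite mulmxDl retrD -!scalemxAl !retrZ.
by rewrite big_split /= -!mulr_sumr; ring.
Qed.

Definition pairing (s : R) (L0 L1 : X -> mx) : R :=
  retr ((1%:M - code_sum L0) *m (1%:M - code_sum L1)) + (s - success L0) * (s - success L1).

Definition spread (L0 L1 : X -> mx) : R :=
  retr ((code_sum L1 - code_sum L0) *m (code_sum L1 - code_sum L0)) +
  (success L1 - success L0) ^+ 2.

Lemma sqdist_mix s t L0 L1 : sqdist s (mix t L0 L1) =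
  sqdist s L0 - 2 * t * (sqdist s L0 - pairing s L0 L1) + t ^+ 2 * spread L0 L1.
Proof.
rewrite /sqdist /pairing /spread code_sum_mix success_mix.
have -> : 1%:M - ((1 - t)%:C *: code_sum L0 + t%:C *: code_sum L1) =
    (1%:M - code_sum L0) - t%:C *: (code_sum L1 - code_sum L0).
  by apply/matrixP => i j; rewrite !mxE !rmorphB rmorph1 /=; ring.
have -> : 1%:M - code_sum L1 = (1%:M - code_sum L0) - (code_sum L1 - code_sum L0).
  by rewrite opprB addrA subrK.
by rewrite retr_sqr_subZ mulmxBr retrB; ring.
Qed.

Lemma spread_le L0 L1 : in_box L0 -> in_box L1 -> spread L0 L1 <= Mr ^+ 2 * n%:R + 1.
Proof.
move=> L0_box L1_box; apply: lerD.
  exact: retr_sqr_sub_le (psdmx_code_sum L0_box) (psdmx_code_sum L1_box)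
    (psdmx_sub_code_sum L0_box) (psdmx_sub_code_sum L1_box).
have := success_ge0 L0_box; have := success_ge0 L1_box.
have := success_le1 L0_box; have := success_le1 L1_box; nra.
Qed.

Definition pos_excess (Y : mx) (x : X) : R := retr (posmx (W x - Mr%:C *: Y)).

Definition dual_value (Y : mx) : R := retr Y + \sum_x q x * pos_excess Y x.

Lemma hermsymmx_W_sub x Y : Y \is hermsymmx -> W x - Mr%:C *: Y \is hermsymmx.
Proof. by move=> hY; apply: hermsymmxB (psdmx_herm (W_psd x)) (hermsymmxZ _ hY). Qed.

Lemma retr_minmx_W B x : B \is hermsymmx ->
  retr (minmx (W x) (Mr%:C *: posmx B)) = 1 - pos_excess (posmx B) x.
Proof.
move=> hB; rewrite minmxE; first by rewrite retrB retr_W.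
exact: hermsymmx_W_sub (psdmx_herm (psdmx_posmx hB)).
Qed.

Lemma retr_minmx_W_negmx B x : B \is hermsymmx ->
  retr (minmx (W x + Mr%:C *: negmx B) (Mr%:C *: posmx B)) =
  1 + Mr * retr (negmx B) - pos_excess B x.
Proof.
move=> hB; have WB : W x + Mr%:C *: negmx B - Mr%:C *: posmx B = W x - Mr%:C *: B.
  by rewrite -[in RHS](posmx_sub_negmx hB) scalerBr opprB addrA.
rewrite minmxE WB; first by rewrite retrB retrD retrZ retr_W.
exact: hermsymmx_W_sub.
Qed.

Lemma pos_excess_posmx_le B x : B \is hermsymmx ->
  pos_excess (posmx B) x <= pos_excess B x /\ pos_excess (posmx B) x <= 1.
Proof.
move=> hB; have hBp := psdmx_herm (psdmx_posmx hB); have M_ge0 := ltW Mr_gt0.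
rewrite /pos_excess; split.
  apply: retr_posmx_le; [exact: hermsymmx_W_sub | exact: hermsymmx_W_sub |].
  have -> : W x - Mr%:C *: B - (W x - Mr%:C *: posmx B) = Mr%:C *: negmx B.
    rewrite -{1}(posmx_sub_negmx hB); move: (posmx B) (negmx B) => P N.
    by apply/matrixP => i j; rewrite !mxE; ring.
  exact: psdmxZ (psdmx_negmx hB).
rewrite -[leRHS](retr_W x); apply: retr_posmx_le_psd (W_psd x) _.
  exact: hermsymmx_W_sub.
by rewrite opprB addrC subrK; exact: psdmxZ (psdmx_posmx hB).
Qed.

Lemma lemma2_objE B : B \is hermsymmx ->
  lemma2_obj Mr W q B =
  (1 - \sum_x q x * pos_excess (posmx B) x - 2^-1 * retr (posmx B)) +
  (Mr^-1 * (1 + Mr * retr (negmx B) - \sum_x q x * pos_excess B x) - 2^-1 * retr (posmx B)).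
Proof.
move=> hB; rewrite /lemma2_obj; congr (_ - _ + (_ * _ - _)).
  rewrite -[X in X - _]sum_q -sumrB; apply: eq_bigr => x _.
  by rewrite retr_minmx_W // mulrBr mulr1.
rewrite -[1 + _]sum_q_mulr -sumrB; apply: eq_bigr => x _.
by rewrite retr_minmx_W_negmx // mulrBr.
Qed.

Lemma obj_ge_dual B : B \is hermsymmx -> 1 - dual_value B <= lemma2_obj Mr W q B.
Proof.
have arith sb sa rp rn : sb <= (1 - Mr^-1) * sa + Mr^-1 ->
    1 - (rp - rn + sa) <= 1 - sb - 2^-1 * rp + (Mr^-1 * (1 + Mr * rn - sa) - 2^-1 * rp).
  by rewrite mulrBr mulrDr mulrA mulVf ?gt_eqF ?Mr_gt0 // mulrBl !mul1r; lra.
move=> hB; have m_ge0 : 0 <= Mr^-1 by rewrite invr_ge0 ler0n.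
have m_le1 : Mr^-1 <= 1 by rewrite invf_le1 ?ler1n ?Mr_gt0.
have sum_le : \sum_x q x * pos_excess (posmx B) x <=
    (1 - Mr^-1) * \sum_x q x * pos_excess B x + Mr^-1.
  rewrite mulr_sumr -[X in _ + X]sum_q_mulr -big_split /=.
  apply: ler_sum => x _; rewrite mulrCA -mulrDr ler_wpM2l ?q_ge0 //.
  have [] := pos_excess_posmx_le x hB.
  move: (pos_excess _ x) (pos_excess B x) (Mr^-1) m_ge0 m_le1.
  move=> u v m m_ge0 m_le1 u_le_v u_le1.
  rewrite -subr_ge0 (_ : _ - u = (1 - m) * (v - u) + m * (1 - u)); last by ring.
  by rewrite addr_ge0 ?mulr_ge0 ?subr_ge0.
have trB : retr B = retr (posmx B) - retr (negmx B) by rewrite -retrB posmx_sub_negmx.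
by rewrite lemma2_objE // /dual_value trB; exact: arith sum_le.
Qed.

Definition posproj_code (Y : mx) : X -> mx :=
  fun x => (Mr * q x)%:C *: posproj (W x - Mr%:C *: Y).

Lemma in_box_posproj_code Y : in_box (posproj_code Y).
Proof.
move=> x; have Mq_ge0 : 0 <= Mr * q x by rewrite mulr_ge0 ?ler0n ?q_ge0.
split; first exact: psdmxZ (psdmx_posproj _).
by rewrite -scalerBr; exact: psdmxZ (psdmx_1_posproj _).
Qed.

Lemma dual_value_posproj_code Y : Y \is hermsymmx ->
  dual_value Y = retr (Y *m (1%:M - code_sum (posproj_code Y))) + success (posproj_code Y).
Proof.
move=> hY; have Mr_neq0 : Mr != 0 by rewrite gt_eqF ?Mr_gt0.
rewrite /dual_value /success /code_sum mulmxBr mulmx1 retrB mulmx_sumr retr_sum -addrA.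
congr (_ + _); rewrite mulr_sumr -sumrN -big_split /=; apply: eq_bigr => x _.
rewrite /pos_excess /posproj_code -(retr_posproj_mul (hermsymmx_W_sub x hY)).
rewrite mulmxBr retrB -!scalemxAl -!scalemxAr !retrZ [retr (Y *m _)]retr_mulC.
by field.
Qed.

Section Separation.
Variable S : R.
Hypothesis success_le_S : forall L, in_box L -> code_sum L = 1%:M -> success L <= S.

Lemma success_le_of_almost_povm eps L : 0 <= eps -> in_box L ->
  psdmx (eps%:C *: 1%:M - (1%:M - code_sum L)) ->
  psdmx (eps%:C *: 1%:M + (1%:M - code_sum L)) ->
  success L <= S + eps.
Proof.
move=> eps_ge0 L_box lower upper.
have S_ge := success_le_S in_box_uniform code_sum_uniform; rewrite success_uniform in S_ge.
(* For [M = 1] the repaired family may leave the box, but then [S >= M^-1 = 1]. *)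
case: (leqP M 1) => [M_le1|M_gt1].
  have M_eq1 : M = 1%N by apply/eqP; rewrite eqn_leq M_le1 M_gt0.
  move: S_ge; rewrite M_eq1 invr1 => S_ge; have := success_le1 L_box; lra.
have eps1_gt0 : 0 < 1 + eps by lra.
set L' := repair (1 + eps)^-1 L.
have L'_box : in_box L' by exact: in_box_repair.
have a_ge0 : 0 <= (1 + eps)^-1 by rewrite invr_ge0; lra.
have : success L <= (1 + eps) * success L'.
  rewrite -[success L]mul1r -[X in X * _](mulfV (lt0r_neq0 eps1_gt0)) -mulrA ler_pM2l //.
  exact: success_repair_ge a_ge0 (psdmx_repair_rest eps_ge0 upper).
have := success_le_S L'_box (code_sum_repair _ _); have := success_le1 L'_box; nra.
Qed.

Lemma sqdist_lower_bound d L : 0 < d -> in_box L -> (d / 2) ^+ 2 <= sqdist (S + d) L.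
Proof.
move=> d_gt0 L_box; have hE := hermsymmx_1_sub_code_sum L_box.
have d2_ge0 : 0 <= d / 2 by rewrite divr_ge0 // ltW.
have := retr_sqr_ge0 hE; rewrite /sqdist.
case: (lerP ((d / 2) ^+ 2) (retr ((1%:M - code_sum L) *m (1%:M - code_sum L)))) => [far|near].
  by have := sqr_ge0 (S + d - success L); lra.
have [lower upper] := retr_sqr_loewner_bound hE d2_ge0 (ltW near).
have := success_le_of_almost_povm d2_ge0 L_box lower upper; nra.
Qed.

Lemma near_min_separates d : 0 < d ->
  exists2 L0, in_box L0 & forall L1, in_box L1 -> (d / 2) ^+ 2 / 2 <= pairing (S + d) L0 L1.
Proof.
move=> d_gt0; set g := (d / 2) ^+ 2; set N := Mr ^+ 2 * n%:R + 1 + g.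
have g_gt0 : 0 < g by rewrite exprn_gt0 // divr_gt0.
have Mn_ge0 : 0 <= Mr ^+ 2 * n%:R by rewrite mulr_ge0 ?sqr_ge0.
have N_gt0 : 0 < N by rewrite /N; lra.
have t01 : 0 <= g / (2 * N) <= 1.
  apply/andP; split; first by apply: divr_ge0; lra.
  by rewrite ler_pdivrMr ?mulr_gt0 // mul1r /N; lra.
have eta_gt0 : 0 < g ^+ 2 / (4 * N) by rewrite divr_gt0 ?exprn_gt0 // mulr_gt0.
have [L0 L0_box L0_min] := sqdist_near_min (S + d) eta_gt0.
exists L0 => // L1 L1_box.
have := L0_min _ (in_box_mix t01 L0_box L1_box); rewrite sqdist_mix => near.
have spread_le_N : spread L0 L1 <= N.
  by apply: le_trans (spread_le L0_box L1_box) _; rewrite /N; lra.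
have far := sqdist_lower_bound d_gt0 L0_box; rewrite -/g in far.
have := approx_min_quadratic g_gt0 N_gt0 spread_le_N near; lra.
Qed.

Lemma dual_witness d : 0 < d ->
  exists2 B, B \is hermsymmx & 1 - S - d <= lemma2_obj Mr W q B.
Proof.
move=> d_gt0; have [L0 L0_box L0_sep] := near_min_separates d_gt0.
have g_gt0 : 0 < (d / 2) ^+ 2 / 2 by rewrite divr_gt0 // exprn_gt0 // divr_gt0.
have S_ge := success_le_S in_box_uniform code_sum_uniform; rewrite success_uniform in S_ge.
set tau := S + d - success L0.
have tau_gt0 : 0 < tau.
  have := L0_sep _ in_box_uniform.
  rewrite /pairing code_sum_uniform subrr mulmx0 retr0 add0r success_uniform -/tau => sep.
  have : 0 < tau * (S + d - Mr^-1) by apply: (lt_le_trans g_gt0); lra.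
  by rewrite pmulr_lgt0 //; lra.
set Y := (- tau^-1)%:C *: (1%:M - code_sum L0).
have hY : Y \is hermsymmx by exact: hermsymmxZ (hermsymmx_1_sub_code_sum L0_box).
have E0 : 1%:M - code_sum L0 = (- tau)%:C *: Y.
  by rewrite /Y scalerA -rmorphM /= mulrNN mulfV ?scale1r // gt_eqF.
exists Y => //; apply: le_trans (obj_ge_dual hY); rewrite dual_value_posproj_code //.
have := L0_sep _ (in_box_posproj_code Y).
rewrite /pairing E0 -scalemxAl retrZ -/tau => sep.
have : 0 < tau * (S + d - (retr (Y *m (1%:M - code_sum (posproj_code Y))) +
                          success (posproj_code Y))).
  by apply: (lt_le_trans g_gt0); lra.
by rewrite pmulr_rgt0 // subr_gt0; lra.
Qed.

End Separation.

Lemma success_le_ns_success L : in_box L -> code_sum L = 1%:M ->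
  ((success L)%:E <= ns_success Mr W)%E.
Proof.
move=> L_box L_sum; apply: ereal_sup_ubound; exists (success L) => //.
exists L, (fun x => Mr * q x); split => //.
- by move=> x; apply: mulr_ge0; [exact: ler0n | exact: q_ge0].
- by rewrite -mulr_sumr sum_q mulr1.
Qed.

Lemma ns_success_le1 : (ns_success Mr W <= 1%:E)%E.
Proof.
apply: ge_ereal_sup => _ [s [Lam [p [_ Lam_le _ sum_p ->]]] <-]; rewrite lee_fin.
rewrite ler_pdivrMl ?Mr_gt0 // mulr1 -sum_p; apply: ler_sum => x _.
by have := retr_mul_le_scalar (W_psd x) (proj2 (Lam_le x)); rewrite retr_W mulr1.
Qed.
End NonSignallingCodes.

Theorem lemma2 (R : realType) (X : finType) (n : nat)
    (W : X -> 'M[R[i]]_n) (M : nat) :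
  (forall x, density (W x)) ->
  (0 < M)%N ->
  (eps_NS (M%:R : R) W <=
   ereal_inf [set v | exists p : X -> R, distribution p /\
     v = ereal_sup [set (lemma2_obj (M%:R : R) W p B)%:E |
                    B in [set B : 'M[R[i]]_n | B \is hermsymmx]]])%E.
Proof.
move=> W_density M_gt0; apply/ereal_infP => _ [q [q_distr ->]].
set NS := ns_success (M%:R : R) W.
have NS_le1 : (NS <= 1%:E)%E := ns_success_le1 W_density M_gt0.
have NS_ge : ((M%:R : R)^-1%:E <= NS)%E.
  have := success_le_ns_success W q_distr (in_box_uniform n M_gt0 q_distr)
    (code_sum_uniform n q_distr).
  by rewrite success_uniform.
have NS_fin : NS \is a fin_num.
  by rewrite fin_numElt (lt_le_trans (ltNyr _) NS_ge) (le_lt_trans NS_le1 (ltry _)).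
have S_ub L : in_box M q L -> code_sum L = 1%:M -> success W M L <= fine NS.
  move=> L_box L_sum; rewrite -lee_fin fineK //.
  by rewrite (success_le_ns_success W q_distr L_box L_sum).
rewrite /eps_NS -/NS -(fineK NS_fin) -EFinB; apply/lee_addgt0Pr => d d_gt0.
have [B hB B_obj] := dual_witness W_density M_gt0 q_distr S_ub d_gt0.
rewrite -[1 - _](subrK d) EFinD; apply: leeD2r.
apply: (@le_trans _ _ (lemma2_obj (M%:R : R) W q B)%:E); first by rewrite lee_fin.
by apply: ereal_sup_ubound; exists B.
Qed.
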